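(* Consider the discrete-time linear system $x_{t+1}=Ax_t+Bu_t$, $t=0,\dots,T-1$, with $x_t\in\mathbb{R}^n$, $u_t\in\mathbb{R}^m$, finite horizon $T\in\mathbb{N}$, and random initial state $x_0\sim p_0$. Let $Q,Q_F\in\mathbb{R}^{n\times n}$ and $R\in\mathbb{R}^{m\times m}$ be symmetric positive definite, and let $\psi,\psi_F:\mathbb{R}^n\to\mathbb{R}$ be continuously differentiable, bounded from below, with $\psi(0)=\psi_F(0)=0$. Let $\mathcal{H}$ be a Hilbert space of measurable functions $\mathbb{R}^n\to\mathbb{R}^m$ with inner product $\langle\cdot,\cdot\rangle_{\mathcal H}$ and norm $\|\cdot\|_{\mathcal H}$. For a policy sequence $\pi_{0:T-1}=\{\pi_0,\dots,\pi_{T-1}\}$, $\pi_t\in\mathcal H$, with closed-loop inputs $u_t=\pi_t(x_t)$, define $V_T(x)=x^\top Q_Fx+\psi_F(x)$ and, for $t=T-1,\dots,0$, $$V_t(x)=x^\top Qx+\pi_t(x)^\top R\pi_t(x)+\psi(x)+V_{t+1}(Ax+B\pi_t(x)),$$ and the stage functional $$\tilde J_t(\pi_{t:T-1})=\mathbb{E}\big[x_t^\top Qx_t+\pi_t(x_t)^\top R\pi_t(x_t)+\psi(x_t)+V_{t+1}(Ax_t+B\pi_t(x_t))\big],$$ where the expectation is over the closed-loop state $x_t$ generated from $x_0\sim p_0$. For each $t$ and each fixed tail $\pi_{t+1:T-1}$, let $\overline{D\tilde J_t}(\cdot,\cdot,\pi_{t+1:T-1}):\mathcal H\times\mathcal H\to\mathcal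 H$ be a discrete Fréchet derivative of $\phi\mapsto\tilde J_t(\phi,\pi_{t+1:T-1})$, i.e. for all $\phi,\varphi\in\mathcal H$, $$\langle\phi-\varphi,\overline{D\tilde J_t}(\phi,\varphi,\pi_{t+1:T-1})\rangle_{\mathcal H}=\tilde J_t(\phi,\pi_{t+1:T-1})-\tilde J_t(\varphi,\pi_{t+1:T-1}),$$ and $\overline{D\tilde J_t}(\phi,\varphi,\pi_{t+1:T-1})\to D\tilde J_t(\varphi)$ (the Riesz representative of the Fréchet derivative at $\varphi$) as $\|\phi-\varphi\|_{\mathcal H}\to0$. Let $\delta>0$ and let policy sequences $\pi^k_{0:T-1}$, $k=0,1,2,\dots$, be generated by the implicit update, performed backward for $t=T-1,\dots,0$, $$\pi_t^{k+1}=\pi_t^k-\delta\,\overline{D\tilde J_t}\big(\pi_t^{k+1},\pi_t^k,\pi_{t+1:T-1}^{k+1}\big).$$ Then for every iteration $k$ and any $\delta>0$, $$\tilde J_0(\pi^{k+1}_{0:T-1})-\tilde J_0(\pi^k_{0:T-1})=-\frac{1}{\delta}\sum_{t=0}^{T-1}\|\pi_t^{k+1}-\pi_t^k\|_{\mathcal H}^2\le0.$$ Consequently, the sequence $\{\tilde J_0(\pi^k_{0:T-1})\}_{k\ge0}$ is monotonically non-increasing and converges as $k\to\infty$, and $\sum_{t=0}^{T-1}\|\pi_t^{k+1}-\pi_t^k\|_{\mathcal H}^2\to0$.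
   Context: This is a team (multi-agent) control problem: the stacked input $u_t$ collects the inputs of all team members, $B=[B_1\ \cdots\ B_N]$, and the team jointly minimizes the finite-horizon expected cost $\mathbb{E}[\sum_{t=0}^{T-1}(x_t^\top Qx_t+u_t^\top Ru_t+\psi(x_t))+x_T^\top Q_Fx_T+\psi_F(x_T)]$ over state-feedback policies in $\mathcal H$. The notation $\pi_{t:T-1}=(\pi_t,\pi_{t+1:T-1})$ denotes the tail of the policy sequence from time $t$. *)

From HB Require Import structures.
From mathcomp Require Import all_boot all_order all_algebra.
From mathcomp Require Import all_classical all_reals all_analysis.
Set Implicit Arguments. Unset Strict Implicit. Unset Printing Implicit Defensive.
Import Order.TTheory GRing.Theory Num.Theory.
Import numFieldNormedType.Exports.
Local Open Scope classical_set_scope.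
Local Open Scope ring_scope.

Definition cvec_display : measure_display. Proof. exact. Qed.

Section measurable_cvec.
Context (R : realType) (n : nat).
Let coors : 'I_n -> 'cV[R]_n -> R := fun i x => x i ord0.
Let s0 : g_sigma_preimage coors set0.
Proof. exact: sigma_algebra0. Qed.
Let sC A : g_sigma_preimage coors A -> g_sigma_preimage coors (~` A).
Proof. exact: sigma_algebraC. Qed.
Let sU (F : _^nat) : (forall i, g_sigma_preimage coors (F i)) ->
  g_sigma_preimage coors (\bigcup_i (F i)).
Proof. exact: sigma_algebra_bigcup. Qed.
HB.instance Definition _ := @isMeasurable.Build cvec_display
  'cV[R]_n (g_sigma_preimage coors) s0 sC sU.
End measurable_cvec.

Definition qf (R : realType) (n : nat) (M : 'M[R]_n) (x : 'cV[R]_n) : R :=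
  (x^T *m M *m x) ord0 ord0.

Definition sym_posdef (R : realType) (n : nat) (M : 'M[R]_n) : Prop :=
  M^T = M /\ forall x : 'cV[R]_n, x != 0 -> 0 < qf M x.

(* continuously differentiable f : R^n -> R  (differentiable everywhere and
   the differential x |-> Df(x) is continuous; in finite dimension this is
   continuity of x |-> Df(x) v for every direction v) *)
Definition C1 (R : realType) (n : nat) (f : 'cV[R]_n -> R) : Prop :=
  forall x : 'cV[R]_n, differentiable f x /\
    forall v : 'cV[R]_n, continuous (fun y : 'cV[R]_n => 'd f y v).

Definition bounded_below (R : realType) (n : nat) (f : 'cV[R]_n -> R) : Prop :=
  exists c : R, forall x, c <= f x.

(* A real Hilbert space H of measurable functions R^n -> R^m: an abstract    *)
(* real vector space H with inner product ip, complete for the induced norm, *)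
(* together with an injective linear "evaluation" ev identifying each        *)
(* element of H with a measurable function R^n -> R^m.                       *)

Definition hnorm (R : realType) (H : lmodType R) (ip : H -> H -> R) (f : H) : R :=
  Num.sqrt (ip f f).

Record function_hilbert (R : realType) (n m : nat) (H : lmodType R)
    (ip : H -> H -> R) (ev : H -> 'cV[R]_n -> 'cV[R]_m) : Prop := {
  ip_sym : forall f g, ip f g = ip g f;
  ip_linear : forall (a : R) f g h, ip (a *: f + g) h = a * ip f h + ip g h;
  ip_pos : forall f, f != 0 -> 0 < ip f f;
  ip_complete : forall u : nat -> H,
    (forall e : R, 0 < e -> exists N, forall i j, (N <= i)%N -> (N <= j)%N ->
        hnorm ip (u i - u j) < e) ->
    exists l : H, forall e : R, 0 < e -> exists N, forall i, (N <= i)%N ->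
        hnorm ip (u i - l) < e;
  ev_linear : forall (a : R) f g x, ev (a *: f + g) x = a *: ev f x + ev g x;
  ev_inj : injective ev;
  ev_measurable : forall f, measurable_fun setT (ev f)
}.

Definition frechet_grad (R : realType) (H : lmodType R) (ip : H -> H -> R)
    (F : H -> R) (v G : H) : Prop :=
  forall e : R, 0 < e -> exists d : R, 0 < d /\
    forall h : H, hnorm ip h < d -> `|F (v + h) - F v - ip h G| <= e * hnorm ip h.

Definition upd (H : Type) (pol : nat -> H) (t : nat) (phi : H) : nat -> H :=
  fun s => if s == t then phi else pol s.

Section control.
Context (R : realType) (n m : nat) (T : nat) (A : 'M[R]_n) (B : 'M[R]_(n, m))
  (Q QF : 'M[R]_n) (Rc : 'M[R]_m) (psi psiF : 'cV[R]_n -> R)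
  (H : lmodType R) (ev : H -> 'cV[R]_n -> 'cV[R]_m).

Fixpoint cl_state (pol : nat -> H) (t : nat) (x0 : 'cV[R]_n) : 'cV[R]_n :=
  match t with
  | 0 => x0
  | t'.+1 => let x := cl_state pol t' x0 in A *m x + B *m ev (pol t') x
  end.

(* Vfrom pol s k x : cost-to-go from state x at time s with k steps left;
   V_t = Vfrom pol t (T - t), so V_T(x) = x^T QF x + psiF x and
   V_t(x) = x^T Q x + pi_t(x)^T Rc pi_t(x) + psi x + V_{t+1}(A x + B pi_t(x)) *)
Fixpoint Vfrom (pol : nat -> H) (s k : nat) (x : 'cV[R]_n) : R :=
  match k with
  | 0 => qf QF x + psiF x
  | k'.+1 => let u := ev (pol s) x in
      qf Q x + qf Rc u + psi x + Vfrom pol s.+1 k' (A *m x + B *m u)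
  end.

Definition Vt (pol : nat -> H) (t : nat) : 'cV[R]_n -> R := Vfrom pol t (T - t).

Definition stage_integrand (pol : nat -> H) (t : nat) (x0 : 'cV[R]_n) : R :=
  let x := cl_state pol t x0 in
  let u := ev (pol t) x in
  qf Q x + qf Rc u + psi x + Vt pol t.+1 (A *m x + B *m u).

Definition Jtil (p0 : probability 'cV[R]_n R) (pol : nat -> H) (t : nat) : R :=
  fine (\int[p0]_x0 (stage_integrand pol t x0)%:E)%E.

End control.

From HB Require Import structures.
From mathcomp Require Import all_boot all_order all_algebra.
From mathcomp Require Import all_classical all_reals all_analysis.
From mathcomp Require Import lra.
Set Implicit Arguments. Unset Strict Implicit. Unset Printing Implicit Defensive.
Import Order.TTheory GRing.Theory Num.Theory.
Import numFieldNormedType.Exports.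
Local Open Scope classical_set_scope.
Local Open Scope ring_scope.

(* Changing only the policy at time t leaves the costs incurred before t
   unchanged, so the variation of J_0 equals the variation of J_t.  Passing
   from pi^k to pi^{k+1} one time step at a time, in the backward order of the
   update, each step is an implicit gradient step for J_t, and the discrete
   Frechet identity turns it into an exact decrease of
   ||pi_t^{k+1} - pi_t^k||^2 / delta.  Summing telescopes over t; the costs
   are bounded below, so J_0(pi^k) converges and the decrements tend to 0. *)

Section inner_product.
Context (R : realType) (H : lmodType R) (ip : H -> H -> R).
Hypotheses (ipC : forall f g, ip f g = ip g f)
  (ipDZl : forall (a : R) f g h, ip (a *: f + g) h = a * ip f h + ip g h)
  (ip_gt0 : forall f, f != 0 -> 0 < ip f f).

Lemma ip0l h : ip 0 h = 0.
Proof. by have := ipDZl 1 0 0 h; rewrite scaler0 addr0 mul1r; lra. Qed.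

Lemma ipZr (c : R) f g : ip f (c *: g) = c * ip f g.
Proof. by rewrite ipC -[c *: g]addr0 ipDZl ip0l addr0 ipC. Qed.

Lemma ip_ge0 f : 0 <= ip f f.
Proof. by have [->|/ip_gt0/ltW //] := eqVneq f 0; rewrite ip0l. Qed.

Lemma hnorm_sqr f : hnorm ip f ^+ 2 = ip f f.
Proof. by rewrite /hnorm sqr_sqrtr // ip_ge0. Qed.

Lemma ip_implicit_step (delta : R) (phi phi' D : H) : delta != 0 ->
  phi' = phi - delta *: D ->
  ip (phi' - phi) D = - delta^-1 * hnorm ip (phi' - phi) ^+ 2.
Proof.
move=> delta0 step.
have -> : D = - delta^-1 *: (phi' - phi).
  by rewrite step addrAC subrr add0r scalerN scaleNr opprK scalerA mulVf ?scale1r.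
by rewrite ipZr hnorm_sqr.
Qed.

End inner_product.

Lemma sufficient_decrease_cvg (R : realType) (J S : R^nat) (c : R) : 0 < c ->
  (forall k, 0 <= S k) -> (forall k, J k.+1 - J k = - c^-1 * S k) ->
  has_lbound (range J) ->
  [/\ nonincreasing_seq J, cvgn J & S @ \oo --> 0].
Proof.
move=> c0 S0 dJ Jlb.
have SE k : S k = c * (J k - J k.+1).
  by rewrite -opprB dJ mulNr opprK mulrA divff ?gt_eqF // mul1r.
have mono : nonincreasing_seq J.
  apply/nonincreasing_seqP => k; rewrite -subr_le0 dJ mulNr oppr_le0.
  by rewrite mulr_ge0 // invr_ge0 ltW.
have cvJ : cvgn J by exact: nonincreasing_is_cvgn.
split=> //; rewrite (funext SE) -(mulr0 c) -(subrr (limn J)).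
apply: cvgM; first exact: cvg_cst.
by apply: cvgB => //; rewrite (cvg_shiftS J).
Qed.

Section probability_integral.
Context d (X : measurableType d) (R : realType).

Lemma fine_integralB (mu : {measure set X -> \bar R}) (f g : X -> R) :
  mu.-integrable setT (EFin \o f) -> mu.-integrable setT (EFin \o g) ->
  fine (\int[mu]_x (f x)%:E)%E - fine (\int[mu]_x (g x)%:E)%E =
  fine (\int[mu]_x (f x - g x)%:E)%E.
Proof.
move=> intf intg.
under [in RHS]eq_integral do rewrite EFinB.
by rewrite integralB_EFin // [RHS]fineB ?(integrable_fin_num measurableT intf)
  ?(integrable_fin_num measurableT intg).
Qed.

Lemma cst_le_fine_integral (P : probability X R) (f : X -> R) (c : R) :
  P.-integrable setT (EFin \o f) -> (forall x, c <= f x) ->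
  c <= fine (\int[P]_x (f x)%:E)%E.
Proof.
move=> intf cf; rewrite -lee_fin fineK; last exact: integrable_fin_num intf.
have -> : c%:E = (\int[P]_x cst c%:E x)%E.
  rewrite integral_cst // -[LHS]mule1; congr (_ * _)%E; exact/esym/probability_setT.
apply: le_integral => //; first exact: finite_measure_integrable_cst.
by move=> x _; rewrite lee_fin.
Qed.

End probability_integral.

Section splice.
Context (H : Type) (old new : nat -> H).

Definition splice (t : nat) : nat -> H :=
  fun s => if (s < t)%N then old s else new s.

Lemma splice0 : splice 0 = new.
Proof. by apply: funext => s; rewrite /splice ltn0. Qed.

Lemma upd_splice_new t : upd (splice t) t (new t) = splice t.
Proof. by apply: funext => s; rewrite /upd /splice; case: eqVneq => // ->; rewrite ltnn. Qed.

Lemma upd_splice_old t : upd (splice t) t (old t) = splice t.+1.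
Proof. by apply: funext => s; rewrite /upd /splice ltnS; case: ltngtP => // ->. Qed.

End splice.

Lemma qf_ge0 (R : realType) k (M : 'M[R]_k) : sym_posdef M -> forall x, 0 <= qf M x.
Proof.
move=> [_ M_gt0] x; have [->|/M_gt0/ltW //] := eqVneq x 0.
by rewrite /qf mulmx0 mxE.
Qed.

Section cost_to_go.
Context (R : realType) (n m T : nat) (A : 'M[R]_n) (B : 'M[R]_(n, m))
  (Q QF : 'M[R]_n) (Rc : 'M[R]_m) (psi psiF : 'cV[R]_n -> R)
  (H : lmodType R) (ev : H -> 'cV[R]_n -> 'cV[R]_m).

Local Notation cl := (cl_state A B ev).
Local Notation V := (Vfrom A B Q QF Rc psi psiF ev).
Local Notation stage := (stage_integrand T A B Q QF Rc psi psiF ev).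

Definition stage_cost (u : H) (x : 'cV[R]_n) : R :=
  qf Q x + qf Rc (ev u x) + psi x.

Fixpoint run_cost (pol : nat -> H) (t : nat) (x0 : 'cV[R]_n) : R :=
  match t with
  | 0 => 0
  | t'.+1 => run_cost pol t' x0 + stage_cost (pol t') (cl pol t' x0)
  end.

Lemma cl_state_eq pol pol' t x0 : (forall s, (s < t)%N -> pol s = pol' s) ->
  cl pol t x0 = cl pol' t x0.
Proof.
elim: t => [//|t IH] eq_pol /=.
by rewrite IH ?eq_pol // => s /ltnW; exact: eq_pol.
Qed.

Lemma run_cost_eq pol pol' t x0 : (forall s, (s < t)%N -> pol s = pol' s) ->
  run_cost pol t x0 = run_cost pol' t x0.
Proof.
elim: t => [//|t IH] eq_pol /=.
rewrite IH => [|s /ltnW]; last exact: eq_pol.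
by rewrite /stage_cost (@cl_state_eq pol pol') ?eq_pol // => s /ltnW; exact: eq_pol.
Qed.

Lemma Vfrom_eq pol pol' k : forall s x,
  (forall i, (s <= i < s + k)%N -> pol i = pol' i) -> V pol s k x = V pol' s k x.
Proof.
elim: k => [//|k IH] s x eq_pol /=.
have -> : pol s = pol' s by apply: eq_pol; rewrite leqnn addnS ltnS leq_addr.
by rewrite IH // => i /andP[si ik]; apply: eq_pol; rewrite ltnW //= -addSnnS.
Qed.

Lemma Vfrom_split pol t x0 : (t <= T)%N ->
  V pol 0 T x0 = run_cost pol t x0 + V pol t (T - t) (cl pol t x0).
Proof.
elim: t => [|t IH] tT; first by rewrite subn0 add0r.
by rewrite IH ?(ltnW tT) // -(subnSK tT) /= /stage_cost !addrA.
Qed.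

Lemma stage_integrandE pol t x0 : (t < T)%N ->
  stage pol t x0 = V pol t (T - t) (cl pol t x0).
Proof. by move=> tT; rewrite /stage_integrand /Vt -(subnSK tT). Qed.

Lemma stage_integrand_split pol t x0 : (t < T)%N ->
  stage pol 0 x0 = run_cost pol t x0 + stage pol t x0.
Proof.
move=> tT; rewrite stage_integrandE ?(leq_ltn_trans (leq0n t)) // subn0.
by rewrite (Vfrom_split _ _ (ltnW tT)) stage_integrandE.
Qed.

Lemma stage_integrand_updB pol t a b x0 : (t < T)%N ->
  stage (upd pol t a) 0 x0 - stage (upd pol t b) 0 x0 =
  stage (upd pol t a) t x0 - stage (upd pol t b) t x0.
Proof.
move=> tT; rewrite !(stage_integrand_split _ _ tT).
rewrite (@run_cost_eq (upd pol t a) (upd pol t b)) => [|s st].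
  by rewrite opprD addrACA subrr add0r.
by rewrite /upd (ltn_eqF st).
Qed.

Lemma Vfrom_ge (c1 c2 : R) :
  (forall x, 0 <= qf Q x) -> (forall x, 0 <= qf QF x) ->
  (forall u, 0 <= qf Rc u) ->
  (forall x, c1 <= psi x) -> (forall x, c2 <= psiF x) ->
  forall pol k s x, k%:R * c1 + c2 <= V pol s k x.
Proof.
move=> Q0 QF0 Rc0 psi_ge psiF_ge pol; elim=> [|k IH] s x /=.
  by have := QF0 x; have := psiF_ge x; lra.
have := Q0 x; have := Rc0 (ev (pol s) x); have := psi_ge x.
by have := IH s.+1 (A *m x + B *m ev (pol s) x); rewrite mulrSr; lra.
Qed.

Section stage_functional.
Variable p0 : probability 'cV[R]_n R.
Local Notation J := (Jtil T A B Q QF Rc psi psiF ev p0).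

Hypothesis T_gt0 : (0 < T)%N.

Lemma Jtil0_eq pol pol' : (forall s, (s < T)%N -> pol s = pol' s) ->
  J pol 0 = J pol' 0.
Proof.
move=> eq_pol; rewrite /Jtil; congr fine; apply: eq_integral => x0 _; congr EFin.
by rewrite !stage_integrandE // subn0; apply: Vfrom_eq => i /andP[_]; exact: eq_pol.
Qed.

Lemma Jtil_splice_telescope old new :
  J new 0 - J old 0 =
  \sum_(t < T) (J (splice old new t) 0 - J (splice old new t.+1) 0).
Proof.
rewrite -(big_mkord xpredT (fun t => J (splice old new t) 0 - J (splice old new t.+1) 0)).
rewrite -[in LHS](splice0 old new).
rewrite (@Jtil0_eq old (splice old new T)) => [|s sT]; last by rewrite /splice sT.
rewrite -opprB -(telescope_sumr (fun t => J (splice old new t) 0)) // -sumrN.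
by apply: eq_bigr => t _; rewrite opprB.
Qed.

Hypothesis stage_int : forall pol t, (t < T)%N ->
  p0.-integrable setT (fun x0 => (stage pol t x0)%:E).

Lemma Jtil_updB pol t a b : (t < T)%N ->
  J (upd pol t a) 0 - J (upd pol t b) 0 = J (upd pol t a) t - J (upd pol t b) t.
Proof.
move=> tT; rewrite /Jtil !fine_integralB ?stage_int //.
by under eq_integral do rewrite stage_integrand_updB //.
Qed.

End stage_functional.
End cost_to_go.

Section implicit_update.
Context (R : realType) (n m T : nat) (A : 'M[R]_n) (B : 'M[R]_(n, m))
  (Q QF : 'M[R]_n) (Rc : 'M[R]_m) (psi psiF : 'cV[R]_n -> R)
  (H : lmodType R) (ip : H -> H -> R) (ev : H -> 'cV[R]_n -> 'cV[R]_m)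
  (p0 : probability 'cV[R]_n R)
  (DJ : nat -> (nat -> H) -> H -> H -> H) (delta : R) (pi : nat -> nat -> H).

Local Notation J := (Jtil T A B Q QF Rc psi psiF ev p0).

Hypotheses (T_gt0 : (0 < T)%N)
  (hilbert : function_hilbert ip ev) (delta0 : delta != 0)
  (stage_int : forall pol t, (t < T)%N -> p0.-integrable setT
     (fun x0 => (stage_integrand T A B Q QF Rc psi psiF ev pol t x0)%:E))
  (DJ_discrete : forall t pol phi vphi, (t < T)%N ->
     ip (phi - vphi) (DJ t pol phi vphi) = J (upd pol t phi) t - J (upd pol t vphi) t)
  (pi_update : forall k t, (t < T)%N ->
     pi k.+1 t = pi k t - delta *: DJ t (splice (pi k) (pi k.+1) t) (pi k.+1 t) (pi k t)).

Lemma Jtil_splice_step k t : (t < T)%N ->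
  J (splice (pi k) (pi k.+1) t) 0 - J (splice (pi k) (pi k.+1) t.+1) 0 =
  - delta^-1 * hnorm ip (pi k.+1 t - pi k t) ^+ 2.
Proof.
move=> tT.
rewrite -{1}(upd_splice_new (pi k) (pi k.+1) t) -(upd_splice_old (pi k) (pi k.+1) t).
rewrite Jtil_updB // -DJ_discrete //.
exact: (ip_implicit_step (ip_sym hilbert) (ip_linear hilbert) (ip_pos hilbert)
  delta0 (pi_update k tT)).
Qed.

Lemma Jtil_implicit_update k :
  J (pi k.+1) 0 - J (pi k) 0 =
  - delta^-1 * \sum_(t < T) hnorm ip (pi k.+1 t - pi k t) ^+ 2.
Proof.
rewrite Jtil_splice_telescope // mulr_sumr.
by apply: eq_bigr => t _; exact: Jtil_splice_step.
Qed.

End implicit_update.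

Theorem theorem1 (R : realType) (n m T : nat)
  (A : 'M[R]_n) (B : 'M[R]_(n, m)) (p0 : probability 'cV[R]_n R)
  (Q QF : 'M[R]_n) (Rc : 'M[R]_m) (psi psiF : 'cV[R]_n -> R)
  (H : lmodType R) (ip : H -> H -> R) (ev : H -> 'cV[R]_n -> 'cV[R]_m)
  (DJ : nat -> (nat -> H) -> H -> H -> H) (delta : R)
  (pi : nat -> nat -> H) :
  (0 < T)%N ->
  sym_posdef Q -> sym_posdef QF -> sym_posdef Rc ->
  C1 psi -> C1 psiF -> bounded_below psi -> bounded_below psiF ->
  psi 0 = 0 -> psiF 0 = 0 ->
  function_hilbert ip ev ->
  let J := Jtil T A B Q QF Rc psi psiF ev p0 in
  (* the stage functionals are finite: the integrands are p0-integrable *)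
  (forall (pol : nat -> H) (t : nat), (t < T)%N ->
     p0.-integrable setT
       (fun x0 => (stage_integrand T A B Q QF Rc psi psiF ev pol t x0)%:E)) ->
  (* DJ t pol is a discrete Frechet derivative of phi |-> J(upd pol t phi) t *)
  (forall (t : nat) (pol : nat -> H) (phi vphi : H), (t < T)%N ->
     ip (phi - vphi) (DJ t pol phi vphi) =
     J (upd pol t phi) t - J (upd pol t vphi) t) ->
  (forall (t : nat) (pol : nat -> H) (vphi : H), (t < T)%N ->
     exists G : H, frechet_grad ip (fun phi => J (upd pol t phi) t) vphi G /\
       forall e : R, 0 < e -> exists d : R, 0 < d /\
         forall phi : H, hnorm ip (phi - vphi) < d ->
           hnorm ip (DJ t pol phi vphi - G) < e) ->
  0 < delta ->
  (* implicit backward update: at time t, earlier policies are still pi^k,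
     later policies are already pi^{k+1} *)
  (forall (k t : nat), (t < T)%N ->
     pi k.+1 t = pi k t - delta *:
       DJ t (fun s => if (s < t)%N then pi k s else pi k.+1 s)
            (pi k.+1 t) (pi k t)) ->
  (forall k : nat,
     J (pi k.+1) 0 - J (pi k) 0 =
       - delta^-1 * \sum_(t < T) hnorm ip (pi k.+1 t - pi k t) ^+ 2 /\
     - delta^-1 * \sum_(t < T) hnorm ip (pi k.+1 t - pi k t) ^+ 2 <= 0) /\
  (forall k : nat, J (pi k.+1) 0 <= J (pi k) 0) /\
  cvg ((fun k => J (pi k) 0) @ \oo) /\
  ((fun k => \sum_(t < T) hnorm ip (pi k.+1 t - pi k t) ^+ 2) @ \oo --> 0).
Proof.
move=> T_gt0 hQ hQF hRc _ _ [c1 psi_ge] [c2 psiF_ge] _ _ hilbert J stage_int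
  DJ_discrete _ delta_gt0 pi_update.
pose S k := \sum_(t < T) hnorm ip (pi k.+1 t - pi k t) ^+ 2.
have S_ge0 k : 0 <= S k by apply: sumr_ge0 => t _; exact: sqr_ge0.
have decrease k : J (pi k.+1) 0 - J (pi k) 0 = - delta^-1 * S k.
  exact: (Jtil_implicit_update T_gt0 hilbert (lt0r_neq0 delta_gt0) stage_int
    DJ_discrete pi_update).
have J_lb : has_lbound (range (fun k => J (pi k) 0)).
  exists (T%:R * c1 + c2) => _ [k _ <-].
  rewrite /J /Jtil; apply: cst_le_fine_integral; first exact: stage_int.
  move=> x0; rewrite stage_integrandE // subn0.
  by apply: Vfrom_ge => //; exact: qf_ge0.
have [mono cvJ S_cvg0] := sufficient_decrease_cvg delta_gt0 S_ge0 decrease J_lb.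
split=> [k|]; last by split=> [k|//]; exact: mono.
by rewrite decrease mulNr oppr_le0 mulr_ge0 // invr_ge0 ltW.
Qed.
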